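(* Let $(M_1,M_2)$ be a state of a duplex network. Every shortest CLAP admits a choice of witness alternating paths that are pairwise edge-disjoint within each layer; consequently, the batched symmetric-difference operation (replacing each $M_\ell$ by $M_\ell\triangle\bigcup E(p)$, the union over the witness paths $p$ of the layer-$\ell$ segments) is well-defined.
   Context: A duplex network consists of directed graphs $G_1=(V,E_1)$, $G_2=(V,E_2)$ on a common finite node set $V$. For $\ell\in\{1,2\}$, $\mathcal B_\ell$ is the bipartite graph with vertex classes $V^+=\{v^+\}$, $V^-=\{v^-\}$ and an edge $\{u^+,v^-\}$ for each $(u,v)\in E_\ell$. A state is a pair of matchings $M_\ell$ in $\mathcal B_\ell$; $D_\ell=\{v\in V: v^-\text{ uncovered by }M_\ell\}$, $\mathrm{DD}_1=D_1\setminus D_2$, $\mathrm{DD}_2=D_2\setminus D_1$. An admissible segment $(u\xrightarrow{\ell}v)$ requires an $M_\ell$-alternating path (simple path in $\mathcal B_\ell$ alternating between $M_\ell$ and non-$M_\ell$ edges) between $u^-$ and $v^-$, called a witness path, and: for $\ell=1$, $u\in D_1$, $v\notin D_1$; for $\ell=2$, $u\notin D_2$, $v\in D_2$. A CLAP is a sequence of admissible segments $v_0\xrightarrow{\ell_1}v_1\cdots\xrightarrow{\ell_k}v_k$ with $v_0\in\mathrm{DD}_1$, $v_k\in\mathrm{DD}_2$, $\ell_{i+1}\ne\ell_i$ for all $i$, and $v_0,\dots,v_k$ pairwise distinct; a shortest CLAP is one with the minimum number $k$ of segments. *)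

From mathcomp Require Import all_boot.
Set Implicit Arguments. Unset Strict Implicit. Unset Printing Implicit Defensive.

Inductive layer : Type := L1 | L2.

Section Duplex.
Variable V : finType.

(* Vertices of the bipartite graph B_l: inl v = v^+, inr v = v^-. *)
Definition bvert := (V + V)%type.

(* The edge {u^+, v^-} of B_l is encoded by the directed pair (u, v). *)
Definition bedge (x y : bvert) : option (V * V) :=
  match x, y with
  | inl u, inr v => Some (u, v)
  | inr v, inl u => Some (u, v)
  | _, _ => None
  end.

Definition badj (E : rel V) (x y : bvert) : bool :=
  if bedge x y is Some e then E e.1 e.2 else false.

Definition is_matching (E : rel V) (M : {set V * V}) : Prop :=
  (forall e, e \in M -> E e.1 e.2) /\
  (forall e f, e \in M -> f \in M -> e.1 = f.1 -> e = f) /\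
  (forall e f, e \in M -> f \in M -> e.2 = f.2 -> e = f).

Definition Dset (M : {set V * V}) : {set V} :=
  [set v | [forall u, (u, v) \notin M]].

Definition path_edges (x0 : bvert) (s : seq bvert) : seq (V * V) :=
  pmap id (pairmap bedge x0 s).

Definition alt_path (E : rel V) (M : {set V * V}) (x0 : bvert) (s : seq bvert)
  : Prop :=
  [/\ path (badj E) x0 s, uniq (x0 :: s) &
      sorted (fun e f => (e \in M) != (f \in M)) (path_edges x0 s)].

Variables (E1 E2 : rel V) (M1 M2 : {set V * V}).

Definition Elay (l : layer) : rel V := if l is L1 then E1 else E2.
Definition Mlay (l : layer) : {set V * V} := if l is L1 then M1 else M2.
Definition Dlay (l : layer) : {set V} := Dset (Mlay l).

Definition DD1 : {set V} := Dlay L1 :\: Dlay L2.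
Definition DD2 : {set V} := Dlay L2 :\: Dlay L1.

(* A witness path for (u -l-> v): an M_l-alternating path between u^- and
   v^-, given as the tail s of the vertex sequence inr u :: s. *)
Definition witness (l : layer) (u v : V) (s : seq bvert) : Prop :=
  alt_path (Elay l) (Mlay l) (inr u) s /\ last (inr u) s = inr v.

Definition layer_cond (l : layer) (u v : V) : Prop :=
  match l with
  | L1 => u \in Dlay L1 /\ v \notin Dlay L1
  | L2 => u \notin Dlay L2 /\ v \in Dlay L2
  end.

Definition admissible (l : layer) (u v : V) : Prop :=
  (exists s, witness l u v s) /\ layer_cond l u v.

(* A CLAP v0 -l_1-> v1 ... -l_k-> vk, given by v0, vs = [v1;...;vk] and
   ls = [l_1;...;l_k]. The i-th node is nth v0 (v0 :: vs) i. *)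
Definition is_CLAP (v0 : V) (vs : seq V) (ls : seq layer) : Prop :=
  [/\ size vs = size ls,
      v0 \in DD1 /\ last v0 vs \in DD2,
      (forall i, i < size ls ->
         admissible (nth L1 ls i) (nth v0 (v0 :: vs) i) (nth v0 (v0 :: vs) i.+1)),
      (forall i, i.+1 < size ls -> nth L1 ls i.+1 <> nth L1 ls i) &
      uniq (v0 :: vs)].

Definition is_shortest_CLAP (v0 : V) (vs : seq V) (ls : seq layer) : Prop :=
  is_CLAP v0 vs ls /\
  forall v0' vs' ls', is_CLAP v0' vs' ls' -> size ls <= size ls'.

End Duplex.

(* Within one layer, an alternating path in the bipartite graph has a phase: either
   every matched edge is traversed from a v^+ to a u^-, or every one from a u^- to a
   v^+.  For a witness path of an admissible segment the phase is forced by the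
   uncovered endpoint (the start u^- in layer 1, the end v^- in layer 2), so all
   witness paths of one layer have the same phase, and splicing a prefix of one to a
   suffix of another through a common vertex gives, after removing loops, another
   alternating path.  If the witness paths of two segments i < j of the same layer
   met, the splice would witness a segment v_i -> v_(j+1), and cutting segments
   i..j down to it would give a CLAP with j - i fewer segments. *)

From mathcomp Require Import all_boot zify.
Set Implicit Arguments. Unset Strict Implicit. Unset Printing Implicit Defensive.

Lemma splice_path (T : eqType) (e : rel T) x p y q w :
  path e x p -> path e y q -> w \in x :: p -> w \in y :: q ->
  exists s, [/\ path e x s, uniq (x :: s) & last x s = last y q].
Proof.
move=> ep eq wp wq; move: ep eq.
case/splitPl: wp => p1 p2 lp1; case/splitPl: wq => q1 q2 lq1.
rewrite !cat_path lp1 lq1 => /andP[ep1 _] /andP[_ eq2].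
have: path e x (p1 ++ q2) by rewrite cat_path ep1 lp1.
have -> : last y (q1 ++ q2) = last x (p1 ++ q2) by rewrite !last_cat lp1 lq1.
by case/shortenP=> s es us _; exists s.
Qed.

Lemma seq_choice (T : Type) (x0 : T) (n : nat) (P : nat -> T -> Prop) :
  (forall i, i < n -> exists x, P i x) ->
  exists xs, size xs = n /\ forall i, i < n -> P i (nth x0 xs i).
Proof.
elim: n => [|n IH] hP; first by exists [::].
have [xs [sz Pxs]] := IH (fun i lt_in => hP i (leqW lt_in)).
have [x Px] := hP n (ltnSn n).
exists (rcons xs x); rewrite size_rcons sz; split=> // i.
rewrite ltnS leq_eqVlt nth_rcons sz => /orP[/eqP->|lt_in]; first by rewrite ltnn eqxx.
by rewrite lt_in; apply: Pxs.
Qed.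

Section Excise.
Variable T : Type.
Implicit Types (s : seq T) (i j m : nat).

Definition excise i j s : seq T := take i s ++ drop j s.

Lemma size_excise i j s : i <= j <= size s -> size (excise i j s) = size s - (j - i).
Proof. by move=> ijs; rewrite size_cat size_takel ?size_drop; lia. Qed.

Lemma nth_excise x0 i j s m : i <= j -> i <= size s ->
  nth x0 (excise i j s) m = nth x0 s (if m < i then m else m + (j - i)).
Proof.
move=> ij i_s; rewrite nth_cat size_takel //.
by case: ltnP => mi; rewrite ?nth_take ?nth_drop //; congr nth; lia.
Qed.

Lemma last_excise x i j s : j < size s -> last x (excise i j s) = last x s.
Proof.
move=> js; rewrite -[in RHS](cat_take_drop j s) !last_cat.
by case: (drop j s) (size_drop j s) => [/= ?|//]; lia.
Qed.

End Excise.

Lemma excise_subseq (T : eqType) i j (s : seq T) : i <= j -> subseq (excise i j s) s.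
Proof.
move=> ij; rewrite -[X in subseq _ X](cat_take_drop i s) cat_subseq //.
by rewrite -(subnK ij) -drop_drop drop_subseq.
Qed.

Section Phase.
Variable V : finType.
Implicit Types (x y z : bvert V) (s : seq (bvert V)) (E : rel V) (M : {set V * V}).

Definition is_plus x : bool := if x is inl _ then true else false.
Definition matched M x y : bool := if bedge x y is Some e then e \in M else false.
Definition phase M x y : bool := matched M x y (+) is_plus x.
Definition phased_step E M (c : bool) x y : bool := badj E x y && (phase M x y == c).
Definition alternating M (e f : V * V) : bool := (e \in M) != (f \in M).

Lemma badj_bedge E x y : badj E x y -> exists e, bedge x y = Some e.
Proof. by rewrite /badj; case: bedge => // e _; exists e. Qed.

Lemma badj_is_plus E x y : badj E x y -> is_plus y = ~~ is_plus x.
Proof. by case: x y => [?|?] [?|?]. Qed.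

Lemma path_edges_cons x y s e :
  bedge x y = Some e -> path_edges x (y :: s) = e :: path_edges y s.
Proof. by rewrite /path_edges /= => ->. Qed.

Lemma path_edges_mem_inl x s e : e \in path_edges x s -> inl e.1 \in x :: s.
Proof.
elim: s x => [|y s IH] x //; rewrite /path_edges /=.
case exy: (bedge x y) => [f|] /=; last by move/IH => h; rewrite inE h orbT.
rewrite inE => /orP[/eqP-> | /IH]; last by move=> h; rewrite inE h orbT.
by case: x y exy => [u|u] [v|v] //= [<-]; rewrite !inE eqxx ?orbT.
Qed.

Lemma alternating_phase E M x y z e f :
  badj E x y -> bedge x y = Some e -> bedge y z = Some f ->
  alternating M e f = (phase M x y == phase M y z).
Proof.
move=> axy exy eyz; rewrite /phase /matched exy eyz (badj_is_plus axy) /alternating.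
by case: (e \in M); case: (f \in M); case: (is_plus x).
Qed.

Lemma phased_path_alternating E M c x s :
  path (phased_step E M c) x s -> sorted (alternating M) (path_edges x s).
Proof.
elim: s x => [|y s IH] x //= /andP[/andP[axy /eqP pxy] ys].
have [e exy] := badj_bedge axy; rewrite (path_edges_cons _ exy).
move: (IH _ ys); case: s ys {IH} => [|z s] //= /andP[/andP[ayz /eqP pyz] _].
have [f eyz] := badj_bedge ayz; rewrite (path_edges_cons _ eyz) /= => ->.
by rewrite (alternating_phase _ axy exy eyz) pxy pyz eqxx.
Qed.

Lemma alternating_phased E M x y s :
  path (badj E) x (y :: s) -> sorted (alternating M) (path_edges x (y :: s)) ->
  path (phased_step E M (phase M x y)) x (y :: s).
Proof.
elim: s x y => [|z s IH] x y /=; first by rewrite /phased_step eqxx => /andP[-> _].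
move=> /andP[axy ps]; have /andP[ayz _] := ps.
have [e exy] := badj_bedge axy; have [f eyz] := badj_bedge ayz.
rewrite (path_edges_cons _ exy) (path_edges_cons _ eyz) /= => /andP[alt ss].
rewrite /phased_step axy eqxx /=; move: alt.
rewrite (alternating_phase _ axy exy eyz) => /eqP->; apply: IH ps _.
by rewrite (path_edges_cons _ eyz).
Qed.

Lemma phased_step_uncovered E M c x y w v :
  phased_step E M c x y -> bedge x y = Some (w, v) -> v \in Dset M -> c = is_plus x.
Proof.
rewrite /phased_step /phase /matched => /andP[_ /eqP <-] ->.
by rewrite inE => /forallP/(_ w)/negbTE->.
Qed.

End Phase.

Section Duplex.
Variables (V : finType) (E1 E2 : rel V) (M1 M2 : {set V * V}).

Definition layer_phase (l : layer) : bool := if l is L2 then true else false.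

Lemma layer_cond_join l a b c d :
  layer_cond M1 M2 l a b -> layer_cond M1 M2 l c d -> layer_cond M1 M2 l a d.
Proof. by case: l => [[? _] [_ ?]|[? _] [_ ?]]. Qed.

Lemma witness_phased l u v s :
  layer_cond M1 M2 l u v -> witness E1 E2 M1 M2 l u v s ->
  path (phased_step (Elay E1 E2 l) (Mlay M1 M2 l) (layer_phase l)) (inr u) s.
Proof.
move=> uv [[ps _ ss] lst]; case: s ps ss lst => [//|y s] ps ss lst.
have := alternating_phased ps ss; move: (phase _ _ _) => c pc.
suff <- : c = layer_phase l by [].
case: l uv ps ss lst pc => [[uD1 _]|[_ vD2]] _ _ lst pc.
- case: y {lst} pc => w /andP[st _]; last by case/andP: st.
  exact: phased_step_uncovered st (erefl _) uD1.
- move: pc lst; rewrite (lastI y s) rcons_path last_rcons => /andP[_ st] lst_v.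
  move: st; rewrite lst_v.
  case: (last (inr u) (belast y s)) => w st; last by case/andP: st.
  exact: phased_step_uncovered st (erefl _) vD2.
Qed.

Lemma witness_splice l a b c d p q w :
  layer_cond M1 M2 l a b -> layer_cond M1 M2 l c d ->
  witness E1 E2 M1 M2 l a b p -> witness E1 E2 M1 M2 l c d q ->
  w \in inr a :: p -> w \in inr c :: q -> exists s, witness E1 E2 M1 M2 l a d s.
Proof.
move=> ab cd wp wq wap wcq.
have [s [ps us ls]] := splice_path (witness_phased ab wp) (witness_phased cd wq) wap wcq.
exists s; split; last by rewrite ls; case: wq.
split=> //; last exact: phased_path_alternating ps.
by apply: sub_path ps => x y /andP[].
Qed.

Lemma CLAP_excise v0 vs ls i j :
  is_CLAP E1 E2 M1 M2 v0 vs ls -> i < j -> j < size ls -> nth L1 ls i = nth L1 ls j ->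
  admissible E1 E2 M1 M2 (nth L1 ls j) (nth v0 (v0 :: vs) i) (nth v0 (v0 :: vs) j.+1) ->
  is_CLAP E1 E2 M1 M2 v0 (excise i j vs) (excise i j ls).
Proof.
case=> sz [v0D lastD] adm alt un ij js lij adm_ij.
have nodesE m : nth v0 (v0 :: excise i j vs) m =
    nth v0 (v0 :: vs) (if m < i.+1 then m else m + (j - i)).
  by rewrite -subSS (@nth_excise _ v0 i.+1 j.+1 (v0 :: vs)) //=; lia.
have layersE m : nth L1 (excise i j ls) m =
    nth L1 ls (if m < i then m else m + (j - i)).
  by rewrite nth_excise //; lia.
have size_ls' : size (excise i j ls) = size ls - (j - i) by rewrite size_excise //; lia.
split.
- by rewrite size_ls' size_excise sz //; lia.
- by rewrite last_excise ?sz.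
- move=> m; rewrite size_ls' layersE !nodesE !ltnS => lt_m.
  have [lt_mi|lt_im|->] := ltngtP m i.
  + by apply: adm; lia.
  + by rewrite addSn; apply: adm; lia.
  + by rewrite addSn subnKC // ltnW.
- move=> m; rewrite size_ls' !layersE => lt_m.
  have [lt_mi|lt_im|eq_mi] := ltngtP m.+1 i.
  + by apply: alt; lia.
  + by rewrite addSn; apply: alt; lia.
  + by rewrite eq_mi subnKC ?(ltnW ij) // -lij -eq_mi; apply: alt; lia.
- exact: subseq_uniq (@excise_subseq _ i.+1 j.+1 (v0 :: vs) (leqW ij)) un.
Qed.

End Duplex.

Unset Implicit Arguments.

Theorem mainTheorem5 (V : finType) (E1 E2 : rel V) (M1 M2 : {set V * V})
  (hM1 : is_matching E1 M1) (hM2 : is_matching E2 M2)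
  (v0 : V) (vs : seq V) (ls : seq layer) :
  is_shortest_CLAP E1 E2 M1 M2 v0 vs ls ->
  exists ws : seq (seq (bvert V)),
    size ws = size ls /\
    (forall i, i < size ls ->
       witness E1 E2 M1 M2 (nth L1 ls i) (nth v0 (v0 :: vs) i)
         (nth v0 (v0 :: vs) i.+1) (nth [::] ws i)) /\
    (forall i j, i < j -> j < size ls -> nth L1 ls i = nth L1 ls j ->
       forall e,
         e \in path_edges (inr (nth v0 (v0 :: vs) i)) (nth [::] ws i) ->
         e \notin path_edges (inr (nth v0 (v0 :: vs) j)) (nth [::] ws j)).
Proof.
move=> [clap shortest]; have [_ _ adm _ _] := clap.
have [ws [sz wit]] := seq_choice [::] (fun i hi => (adm i hi).1).
exists ws; split=> //; split=> // i j ij js lij e ei; apply/negP => ej.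
have lt_is : i < size ls := ltn_trans ij js.
have ci := (adm i lt_is).2; have wi := wit i lt_is; rewrite lij in ci wi.
have cj := (adm j js).2.
have [s wij] := witness_splice ci cj wi (wit j js)
  (path_edges_mem_inl ei) (path_edges_mem_inl ej).
have adm_ij : admissible E1 E2 M1 M2 (nth L1 ls j) (nth v0 (v0 :: vs) i)
    (nth v0 (v0 :: vs) j.+1) by split; [exists s | exact: layer_cond_join ci cj].
have := shortest _ _ _ (CLAP_excise clap ij js lij adm_ij).
by rewrite size_excise; lia.
Qed.
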